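(* Let $p$ be a prime and $G_0$ a finite centerless $p$-perfect group with $p$ dividing $|G_0|$. Let $\phi:\tilde G_p\to G_0$ be the universal $p$-Frattini cover of $G_0$, let $\ker_0=\ker(\phi)$ and let $\ker_1$ be the Frattini subgroup of $\ker_0$ (the closed subgroup generated by $p$-th powers and commutators of elements of $\ker_0$). Put $G_1=\tilde G_p/\ker_1$ and let $\phi_{1,0}:G_1\to G_0$ be the natural map. Let $P_0$ be a $p$-Sylow subgroup of $G_0$ and $G_0'=N_{G_0}(P_0)$ its normalizer. Then the extension $\phi_{1,0}^{-1}(G_0')\to G_0'$ (restriction of $\phi_{1,0}$) is not split.
   Context: A finite group is $p$-perfect if it has no $\mathbb{Z}/p$ quotient. The universal $p$-Frattini cover $\phi:\tilde G_p\to G_0$ is the (unique up to isomorphism) profinite cover of $G_0$ which is minimal among covers by $p$-projective profinite groups; its kernel is a pro-free pro-$p$ group contained in the Frattini subgroup of $\tilde G_p$, and it is versal for Frattini covers of $G_0$ with $p$-group kernel. In particular $G_1\to G_0$ is the universal Frattini cover of $G_0$ with elementary abelian $p$-group kernel. *)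

From mathcomp Require Import all_boot all_fingroup all_solvable.
Set Implicit Arguments. Unset Strict Implicit. Unset Printing Implicit Defensive.
Local Open Scope group_scope.

Definition p_perfect (p : nat) (rT : finGroupType) (G0 : {set rT}) : Prop :=
  ~ exists N : {group rT}, N <| G0 /\ #|G0 : N| = p.

Definition frattini_abelem_cover (p : nat) (gT rT : finGroupType)
    (G : {group gT}) (G0 : {set rT}) (f : {morphism G >-> rT}) : Prop :=
  [/\ f @* G = G0, 'ker f \subset 'Phi(G) & p.-abelem ('ker f)].

(* The universal Frattini cover of G0 with elementary abelian p-group kernel
   (i.e. G_1 -> G_0): a Frattini cover with elementary abelian p kernel which is
   versal among all such covers: every such cover g : H -> G0 receives a
   homomorphism h : G -> H over G0 (g o h = f). This determines G -> G0 up to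
   isomorphism over G0. *)
Definition universal_frattini_abelem_cover (p : nat) (gT rT : finGroupType)
    (G : {group gT}) (G0 : {set rT}) (f : {morphism G >-> rT}) : Prop :=
  @frattini_abelem_cover p gT rT G G0 f /\
  forall (hT : finGroupType) (H : {group hT}) (g : {morphism H >-> rT}),
    @frattini_abelem_cover p hT rT H G0 g ->
    exists h : {morphism G >-> hT},
      h @* G \subset H /\ {in G, forall x, g (h x) = f x}.

Definition restr_ext_splits (gT rT : finGroupType) (G : {group gT})
    (f : {morphism G >-> rT}) (N : {group rT}) : Prop :=
  exists s : {morphism N >-> gT},
    s @* N \subset G /\ {in N, forall x, f (s x) = x}.

(* If phi10^-1(N_G0(P0)) -> N_G0(P0) split, so would its restriction over the
   Sylow subgroup P0, and then, by Gaschutz's theorem (the kernel is an abelian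
   p-group of index prime to p in phi10^-1(P0)), G1 -> G0 itself would split.
   A split extension whose kernel lies in the Frattini subgroup is trivial, so
   phi10 would be an isomorphism.  That is impossible when p divides |G0|: for
   x in G0 of order p, the extension of G0 induced from Z/p^2 -> <x> (a subgroup
   of the wreath product Z/p^2 wr G0), cut down to a minimal supplement of its
   kernel, is a Frattini cover with elementary abelian p-kernel in which x has
   no lift of order p, whereas versality would map the order-p lift of x in
   G1 = G0 to one. *)

From HB Require Import structures.
From mathcomp Require Import all_boot all_algebra all_fingroup all_solvable.
Set Implicit Arguments. Unset Strict Implicit. Unset Printing Implicit Defensive.
Import GRing.Theory.
Local Open Scope group_scope.

Lemma Frattini_split_trivial (gT : finGroupType) (G M : {group gT}) :
  M \subset 'Phi(G) -> [splits G, over M] -> M :=: 1.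
Proof.
move=> sMPhi /splitsP[K /complP[tiMK defG]].
have sMG : M \subset G := subset_trans sMPhi (Phi_sub G).
have sKG : K \subset G by rewrite -defG mulG_subr.
have defK : K :=: G.
  rewrite -(genGid K); apply: Phi_nongen; apply/eqP; rewrite eqEsubset.
  rewrite join_subG Phi_sub sKG -{1}defG mul_subG ?joing_subr //.
  exact: subset_trans sMPhi (joing_subl _ _).
by rewrite -tiMK defK (setIidPl sMG).
Qed.

Lemma section_splits_morphpre (gT rT : finGroupType) (G : {group gT})
    (f : {morphism G >-> rT}) (N Q : {group rT}) (s : {morphism N >-> gT}) :
    s @* N \subset G -> {in N, forall y, f (s y) = y} -> Q \subset N ->
  [splits f @*^-1 Q, over 'ker f].
Proof.
move=> sNG fsK sQN.
have sQG : s @* Q \subset G := subset_trans (morphimS s sQN) sNG.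
apply/splitsP; exists (s @* Q)%G; apply/complP; split.
  apply/trivgP/subsetP => z /setIP[Kz /morphimP[y Ny Qy def_z]].
  have y1 : y = 1 by rewrite -(fsK y Ny) -def_z (mker Kz).
  by rewrite def_z y1 morph1 inE.
apply/eqP; rewrite eqEsubset mul_subG ?ker_sub_pre //=; last first.
  apply/subsetP => z /morphimP[y Ny Qy ->].
  by rewrite mem_morphpre ?fsK ?(subsetP sQG) ?mem_morphim.
apply/subsetP => z /morphpreP[Gz Qfz].
have Nfz : f z \in N := subsetP sQN _ Qfz.
have Gsfz : s (f z) \in G by rewrite (subsetP sNG) ?mem_morphim.
rewrite -(mulgKV (s (f z)) z) mem_mulg ?mem_morphim //.
by rewrite !inE groupM ?groupV //= morphM ?groupV // morphV // fsK // mulgV.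
Qed.

Lemma Sylow_preimage_split (gT rT : finGroupType) (p : nat) (G : {group gT})
    (f : {morphism G >-> rT}) (P : {group rT}) :
    p.-group ('ker f) -> abelian ('ker f) -> p.-Sylow(f @* G) P ->
  [splits f @*^-1 P, over 'ker f] -> [splits G, over 'ker f].
Proof.
move=> pK abK sylP; have [_ _ p'iP] := and3P sylP.
have iPG : #|G : f @*^-1 P| = #|f @* G : P|.
  by rewrite -(index_morphpre _ (subxx (f @* G))) morphimGK ?subsetIl.
rewrite (Gaschutz_split (ker_normal f) (ker_sub_pre f P) (subsetIl _ _) abK) //.
by rewrite iPG (pnat_coprime pK p'iP).
Qed.

Lemma Frattini_supplement (gT rT : finGroupType) (E : {group gT})
    (f : {morphism E >-> rT}) :
  exists2 S : {group gT}, S \subset E & f @* S = f @* E /\ 'ker_S f \subset 'Phi(S).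
Proof.
pose supp := [pred S : {group gT} | (S \subset E) && (f @* S == f @* E)].
have suppE : supp E by rewrite /= subxx eqxx.
have [S minS sSE] := mingroup_exists suppE.
have [/andP[_ /eqP fS] minS'] := mingroupP minS.
exists S => //; split=> //; apply/bigcapsP => M /predU1P[-> | maxM].
  exact: subsetIl.
have [propMS maxM'] := maxgroupP maxM; have sMS := proper_sub propMS.
have nsKS : 'ker_S f <| S by rewrite -(ker_restrm sSE) ker_normal.
have sMKS : M <*> 'ker_S f \subset S by rewrite join_subG sMS subsetIl.
have [propMK | ] := boolP (M <*> 'ker_S f \proper S).
  by rewrite -(maxM' _ propMK (joing_subl _ _)) joing_subr.
rewrite properEneq sMKS andbT negbK => /eqP defS.
have /trivgP fK1 : f @* 'ker_S f \subset [1].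
  by rewrite -(morphim_ker f) morphimS ?subsetIr.
have fM : f @* M = f @* E.
  rewrite -fS -defS norm_joinEl ?(subset_trans sMS (normal_norm nsKS)) //.
  by rewrite morphimMl ?(subset_trans sMS sSE) // fK1 mulg1.
have suppM : supp M by rewrite /= (subset_trans sMS sSE) fM eqxx.
by move: propMS; rewrite (minS' M suppM sMS) properxx.
Qed.

Section RegularWreath.

Variables (rT : finGroupType) (m : nat).

Definition wreath := ({ffun rT -> 'Z_m} * rT)%type.
HB.instance Definition _ := Finite.on wreath.

Local Open Scope ring_scope.

Definition rtrans (g : rT) (F : {ffun rT -> 'Z_m}) : {ffun rT -> 'Z_m} :=
  [ffun h => F (h * g)%g].

Lemma rtransM g1 g2 F : rtrans g1 (rtrans g2 F) = rtrans (g1 * g2)%g F.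
Proof. by apply/ffunP=> h; rewrite !ffunE mulgA. Qed.

Lemma rtransD g F1 F2 : rtrans g (F1 + F2) = rtrans g F1 + rtrans g F2.
Proof. by apply/ffunP=> h; rewrite !ffunE. Qed.

Lemma rtrans1 F : rtrans 1%g F = F.
Proof. by apply/ffunP=> h; rewrite !ffunE mulg1. Qed.

Definition wreath_mul (u v : wreath) : wreath :=
  (u.1 + rtrans u.2 v.1, (u.2 * v.2)%g).
Definition wreath_one : wreath := (0, 1%g).
Definition wreath_inv (u : wreath) : wreath := (- rtrans u.2^-1 u.1, u.2^-1)%g.

Lemma wreath_mulA : associative wreath_mul.
Proof.
by move=> [a x] [b y] [c z]; rewrite /wreath_mul /= rtransD rtransM addrA mulgA.
Qed.

Lemma wreath_mul1 : left_id wreath_one wreath_mul.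
Proof. by move=> [a x]; rewrite /wreath_mul /= rtrans1 add0r mul1g. Qed.

Lemma wreath_mulV : left_inverse wreath_one wreath_inv wreath_mul.
Proof. by move=> [a x]; rewrite /wreath_mul /= addNr mulVg. Qed.

HB.instance Definition _ :=
  Finite_isGroup.Build wreath wreath_mulA wreath_mul1 wreath_mulV.

Lemma wreath_mulE (u v : wreath) :
  (u * v)%g = (u.1 + rtrans u.2 v.1, (u.2 * v.2)%g).
Proof. by []. Qed.

Lemma wreath_oneE : (1 : wreath)%g = (0, 1%g).
Proof. by []. Qed.

Lemma wreath_expgE (u : wreath) n :
  (u ^+ n)%g = (\sum_(i < n) rtrans (u.2 ^+ i)%g u.1, (u.2 ^+ n)%g).
Proof.
elim: n => [|n IHn]; first by rewrite expg0 big_ord0.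
by rewrite expgSr IHn wreath_mulE /= big_ord_recr /= expgSr.
Qed.

Lemma wreath_proj_morphM : {in [set: wreath] &, {morph snd : u v / (u * v)%g}}.
Proof. by []. Qed.

Canonical wreath_proj := Morphism wreath_proj_morphM.

End RegularWreath.

Lemma Zp_sqr_mulrn_eq (p a b : nat) : (1 < p)%N ->
  ((a%:R *+ p : 'Z_(p * p)) == b%:R *+ p)%R = (a == b %[mod p])%N.
Proof.
move=> p_gt1; rewrite -!mulrnA !Zp_nat -val_eqE /= Zp_cast; last first.
  by rewrite (@ltn_trans p) // -{1}(muln1 p) ltn_pmul2l // ltnW.
by rewrite -!muln_modl eqn_pmul2r // ltnW.
Qed.

Section InducedExtension.

Variables (rT : finGroupType) (G0 : {group rT}) (p : nat) (x : rT).
Hypotheses (p_pr : prime p) (ox : #[x] = p).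

Local Notation m := (p * p)%N.

Definition logx (c : rT) : nat := oapp val 0%N [pick k : 'I_#[x] | x ^+ k == c].

Lemma logxK c : c \in <[x]> -> x ^+ logx c = c.
Proof.
move=> /cyclePmin[i lt_i_x ->]; rewrite /logx; case: pickP => [k /eqP // |].
by move/(_ (Ordinal lt_i_x)); rewrite eqxx.
Qed.

Local Open Scope ring_scope.

Definition omega (c : rT) : 'Z_m := (logx c)%:R *+ p.

Lemma omegaM c d : c \in <[x]> -> d \in <[x]> ->
  omega (c * d)%g = omega c + omega d.
Proof.
move=> xc xd; rewrite /omega -mulrnDl -natrD; apply/eqP.
by rewrite Zp_sqr_mulrn_eq ?prime_gt1 // -ox -eq_expg_mod_order expgD !logxK ?groupM.
Qed.

Lemma omega_eq0 c : c \in <[x]> -> (omega c == 0) = (c == 1%g).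
Proof.
move=> xc; rewrite -(mul0rn _ p) -[0]/(0%:R : 'Z_m) Zp_sqr_mulrn_eq ?prime_gt1 //.
by rewrite -ox -eq_expg_mod_order logxK.
Qed.

Definition transv (h : rT) : rT := repr (<[x]> :* h).

Definition coset_part (h : rT) : rT := (h * (transv h)^-1)%g.

Lemma coset_part_cycle h : coset_part h \in <[x]>.
Proof.
rewrite /coset_part /transv; have /rcosetP[c xc ->] := mem_repr_rcoset <[x]> h.
by rewrite invMg mulKVg groupV.
Qed.

Lemma coset_partK h : (coset_part h * transv h)%g = h.
Proof. by rewrite mulgKV. Qed.

Lemma transvMl c h : c \in <[x]> -> transv (c * h)%g = transv h.
Proof. by move=> xc; rewrite /transv rcosetM rcoset_id. Qed.

(* [phi h] is [omega] of the <x>-component of [h]; taking [tlog] rather than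
   [phi] as primitive lets [phi] be divided by [p] on the nose. *)
Definition tlog (h : rT) : 'Z_m := (logx (coset_part h))%:R.
Definition phi (h : rT) : 'Z_m := tlog h *+ p.

Lemma phiMl c h : c \in <[x]> -> phi (c * h)%g = omega c + phi h.
Proof.
have phiE h' : phi h' = omega (coset_part h') by [].
move=> xc; rewrite !phiE {1}/coset_part transvMl // -mulgA.
by rewrite omegaM ?coset_part_cycle.
Qed.

(* The elements (F, g) of Z/p^2 wr G0 with F constant on the cosets <x> h and
   p F equal to the coboundary of phi; on <x> the cocycle phi restricts to the
   embedding omega of <x> into p Z/p^2, which is what obstructs lifting x. *)
Definition induced_ext : {set wreath rT m} :=
  [set u : wreath rT m | [&& u.2 \in G0,
     [forall c in <[x]>, [forall h, u.1 (c * h)%g == u.1 h]] &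
     [forall h, u.1 h *+ p == phi h - phi (h * u.2)%g]]].

Lemma induced_extP (u : wreath rT m) :
  reflect [/\ u.2 \in G0, forall c h, c \in <[x]> -> u.1 (c * h)%g = u.1 h &
             forall h, u.1 h *+ p = phi h - phi (h * u.2)%g]
          (u \in induced_ext).
Proof.
rewrite inE; apply: (iffP and3P) => [[G0u /forall_inP inv_u /forallP eq_u] |].
  split=> // [c h xc | h]; apply/eqP; [exact: (forallP (inv_u c xc)) | exact: eq_u].
move=> [G0u inv_u eq_u]; split=> //.
  by apply/forall_inP => c xc; apply/forallP => h; rewrite inv_u.
by apply/forallP => h; rewrite eq_u.
Qed.

Lemma induced_ext_group_set : group_set induced_ext.
Proof.
apply/group_setP; split.
  apply/induced_extP; rewrite wreath_oneE /=.
  by split=> [|c h _|h]; rewrite ?ffunE ?mulg1 ?subrr ?mul0rn.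
move=> u v /induced_extP[G0u inv_u eq_u] /induced_extP[G0v inv_v eq_v].
apply/induced_extP; rewrite wreath_mulE /=; split=> [|c h xc|h].
- exact: groupM.
- by rewrite !ffunE inv_u // -mulgA (inv_v c).
- have -> : (u.1 + rtrans u.2 v.1) h = u.1 h + v.1 (h * u.2)%g by rewrite !ffunE.
  by rewrite mulrnDl eq_u eq_v mulgA addrA subrK.
Qed.

Canonical induced_ext_group := Group induced_ext_group_set.

Lemma induced_ext_section g : g \in G0 ->
  ([ffun h => tlog (transv h) - tlog (transv h * g)%g], g) \in induced_ext.
Proof.
move=> G0g; apply/induced_extP; split=> //= [c h xc | h]; rewrite !ffunE ?transvMl //.
have phi_split k : phi (h * k)%g = omega (coset_part h) + phi (transv h * k)%g.
  by rewrite -phiMl ?coset_part_cycle // mulgA coset_partK.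
by rewrite mulrnBl -[h in phi h]mulg1 !phi_split mulg1 opprD addrACA subrr add0r.
Qed.

Lemma im_induced_ext : wreath_proj rT m @* induced_ext = G0.
Proof.
apply/eqP; rewrite eqEsubset; apply/andP; split.
  by apply/subsetP => g /morphimP[u _ /induced_extP[G0u _ _] ->].
apply/subsetP => g G0g; apply/morphimP.
exact: MorphimSpec (in_setT _) (induced_ext_section G0g) _.
Qed.

Lemma induced_ext_ker_abelem : p.-abelem ('ker_induced_ext (wreath_proj rT m)).
Proof.
have kerP u : u \in 'ker_induced_ext (wreath_proj rT m) ->
    u.2 = 1%g /\ forall h, u.1 h *+ p = 0.
  case/setIP=> /induced_extP[_ _ eq_u] /mker u2; split=> // h.
  by rewrite eq_u u2 mulg1 subrr.
apply/abelemP => //; split.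
  apply/centsP => u /kerP[u2 _] v /kerP[v2 _].
  by rewrite /commute !wreath_mulE u2 v2 !rtrans1 mulg1 addrC.
move=> u /kerP[u2 pu]; rewrite wreath_expgE u2 expg1n; congr pair.
apply/ffunP => h; rewrite sum_ffunE ffunE (eq_bigr (fun _ => u.1 h)).
  by rewrite sumr_const card_ord pu.
by move=> i _; rewrite expg1n rtrans1.
Qed.

Lemma induced_ext_lift_expg u : u \in induced_ext -> u.2 = x -> (u ^+ p != 1)%g.
Proof.
case/induced_extP=> _ inv_u eq_u ux.
apply/eqP => /(congr1 (fun w : wreath rT m => w.1 1%g)).
rewrite wreath_expgE wreath_oneE sum_ffunE ffunE (eq_bigr (fun _ => u.1 1%g)).
  rewrite sumr_const card_ord eq_u ux mul1g -{1}[x]mulg1 phiMl ?cycle_id //.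
  rewrite opprD addrCA subrr addr0 => /eqP; rewrite oppr_eq0 omega_eq0 ?cycle_id //.
  by rewrite -order_eq1 ox => /eqP p1; move: p_pr; rewrite p1.
by move=> i _; rewrite ffunE mul1g ux -{1}[(x ^+ i)%g]mulg1 inv_u ?mem_cycle.
Qed.

End InducedExtension.

Lemma Frattini_abelem_cover_without_lift (p : nat) (rT : finGroupType)
    (G0 : {group rT}) (x : rT) :
    prime p -> #[x] = p ->
  exists (hT : finGroupType) (H : {group hT}) (g : {morphism H >-> rT}),
    frattini_abelem_cover p G0 g /\ {in H, forall u, g u = x -> u ^+ p != 1}.
Proof.
move=> p_pr ox; set E := induced_ext_group G0 p x.
pose f := restrm (subsetT E) (wreath_proj rT (p * p)).
have [S sSE [fS kerS]] := Frattini_supplement f.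
exists _, S, (restrm sSE f); split; last first.
  by move=> u Su; apply: (induced_ext_lift_expg p_pr ox (subsetP sSE u Su)).
split.
- rewrite morphim_restrm setIid fS morphim_restrm setIid.
  exact: im_induced_ext.
- by rewrite ker_restrm.
- rewrite ker_restrm; apply: abelemS (induced_ext_ker_abelem G0 x p_pr).
  by apply: subset_trans (subsetIr _ _) _; apply/subsetP => u; rewrite !inE /=.
Qed.

Lemma universal_frattini_abelem_cover_ker_neq1 (p : nat) (gT rT : finGroupType)
    (G : {group gT}) (G0 : {group rT}) (f : {morphism G >-> rT}) :
    prime p -> (p %| #|G0|)%N -> universal_frattini_abelem_cover p G0 f ->
  'ker f != 1.
Proof.
move=> p_pr p_dvd_G0 [[fG _ _] univ]; apply/eqP => ker1.
have [x G0x ox] := Cauchy p_pr p_dvd_G0.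
have [hT [H [g [cover_g no_lift]]]] :=
  Frattini_abelem_cover_without_lift G0 p_pr ox.
have [h [hGH ghf]] := univ hT H g cover_g.
have [y Gy def_x] : exists2 y, y \in G & x = f y.
  by move: G0x; rewrite -fG => /morphimP[y _ Gy ->]; exists y.
have y_p1 : y ^+ p = 1.
  have : y ^+ p \in 'ker f.
    by rewrite !inE groupX //= morphX // -def_x -ox expg_order.
  by rewrite ker1 => /set1P.
have Hhy : h y \in H by rewrite (subsetP hGH) ?mem_morphim.
have := no_lift _ Hhy; rewrite ghf // -def_x -morphX // y_p1 morph1 eqxx.
by move/(_ erefl).
Qed.

Theorem lemma2p7 (p : nat) (gT rT : finGroupType) (G1 : {group gT})
    (G0 : {group rT}) (phi10 : {morphism G1 >-> rT}) (P0 : {group rT}) :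
  prime p ->
  'Z(G0) = 1 ->
  p_perfect p G0 ->
  (p %| #|G0|)%N ->
  universal_frattini_abelem_cover p G0 phi10 ->
  P0 \in 'Syl_p(G0) ->
  ~ (restr_ext_splits phi10 ('N_G0(P0))%G).
Proof.
move=> p_pr _ _ p_dvd_G0 univ sylP [s [sNG1 phi_s]].
have [[imG1 kerPhi abelK] _] := univ.
have sylP' : p.-Sylow(phi10 @* G1) P0 by rewrite imG1; move: sylP; rewrite inE.
have sPN : P0 \subset 'N_G0(P0) by rewrite subsetI -{1}imG1 (pHall_sub sylP') normG.
have splitG1 : [splits G1, over 'ker phi10].
  apply: Sylow_preimage_split (abelem_pgroup abelK) (abelem_abelian abelK) sylP' _.
  exact: section_splits_morphpre sNG1 phi_s sPN.
have := universal_frattini_abelem_cover_ker_neq1 p_pr p_dvd_G0 univ.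
by rewrite (Frattini_split_trivial kerPhi splitG1) eqxx.
Qed.
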